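(* Let $p,q,K$ be parameters with $p\neq 0$, and let $a,b,c,d$ be generators of an associative algebra over $\mathbb{C}$ (extended by the parameters) subject to the relations $$ab=qba,\quad pac=ca,\quad ad=da+(q-p)bc,\quad pqbc=cb,\quad pbd=db,\quad cd=qdc.$$ Let $T=\begin{pmatrix} a&b\\ c&d\end{pmatrix}$ and $$\hat R(K;p,q)=\begin{pmatrix}1&0&0&0\\0&1-K&K/p&0\\0&Kq&1-Kq/p&0\\0&0&0&1\end{pmatrix},\qquad R=P\hat R(K;p,q).$$ Then for every value of $K$, $$R\,T_1T_2=T_2T_1\,R .$$
   Context: All $4\times4$ matrices are written in the ordered basis $e_1\otimes e_1,\ e_1\otimes e_2,\ e_2\otimes e_1,\ e_2\otimes e_2$ of $\mathbb{C}^2\otimes\mathbb{C}^2$, with double indices $(ij)$ ordered $11,12,21,22$. $P$ is the permutation (flip) matrix, i.e. the $4\times4$ matrix that swaps the second and third basis vectors. $T_1=T\otimes I_2$ and $T_2=I_2\otimes T$, so $T_1T_2$ has entries $(T_1T_2)_{(ij),(kl)}=T_{ik}T_{jl}$ and $T_2T_1$ has entries $(T_2T_1)_{(ij),(kl)}=T_{jl}T_{ik}$ (the entries of $T$ do not commute, so the order of factors matters). The equality $RT_1T_2=T_2T_1R$ is an equality of $4\times 4$ matrices with entries in the algebra. *)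

From HB Require Import structures.
From mathcomp Require Import all_boot all_order all_algebra.
Set Implicit Arguments. Unset Strict Implicit. Unset Printing Implicit Defensive.
Import GRing.Theory.
Local Open Scope ring_scope.

(* Basis index (ij) in 'I_4 ordered 11,12,21,22: index x encodes (x/2, x%2). *)
Definition fstI (x : 'I_4) : 'I_2 := inord (x %/ 2).
Definition sndI (x : 'I_4) : 'I_2 := inord (x %% 2).

(* T1 = T (x) I_2 *)
Definition tens1 (A : pzRingType) (T : 'M[A]_2) : 'M[A]_4 :=
  \matrix_(x, y) (if sndI x == sndI y then T (fstI x) (fstI y) else 0).
(* T2 = I_2 (x) T *)
Definition tens2 (A : pzRingType) (T : 'M[A]_2) : 'M[A]_4 :=
  \matrix_(x, y) (if fstI x == fstI y then T (sndI x) (sndI y) else 0).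

Definition Tmat (A : pzRingType) (a b c d : A) : 'M[A]_2 :=
  \matrix_(i, j) (if i == 0 then (if j == 0 then a else b)
                  else (if j == 0 then c else d)).

(* Flip matrix P: swaps second and third basis vectors *)
Definition flipP (A : pzRingType) : 'M[A]_4 :=
  \matrix_(x, y) (if (fstI x == sndI y) && (sndI x == fstI y) then 1 else 0).

Definition mx4 (A : pzRingType) (l : seq (seq A)) : 'M[A]_4 :=
  \matrix_(i, j) nth 0 (nth [::] l i) j.

Definition Rhat (F : fieldType) (A : algType F) (K p q : F) : 'M[A]_4 :=
  mx4 [:: [:: 1; 0; 0; 0];
          [:: 0; (1 - K)%:A; (K / p)%:A; 0];
          [:: 0; (K * q)%:A; (1 - K * q / p)%:A; 0];
          [:: 0; 0; 0; 1]].

Definition Rmat (F : fieldType) (A : algType F) (K p q : F) : 'M[A]_4 :=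
  flipP A *m Rhat A K p q.

From HB Require Import structures.
From mathcomp Require Import all_boot all_order all_algebra fingroup perm.
From mathcomp Require Import ring.
Set Implicit Arguments. Unset Strict Implicit. Unset Printing Implicit Defensive.
Import GRing.Theory.
Local Open Scope ring_scope.

(* Conjugation by the flip P exchanges the tensor factors, so P T1 T2 = T2 T1 P
   and, as R = P Rhat, the relation reduces to Rhat commuting with T1 T2.
   Now Rhat = 1 + u w with u = K (-e12 + q e21) and w = e12 - p^-1 e21, and
   the six relations say exactly that u is a right and w a left eigenvector of
   T1 T2 for the same eigenvalue, the quantum determinant ad - q bc.  Hence
   T1 T2 u w = u (ad - q bc) w = u w T1 T2. *)

Definition pairI (i j : 'I_2) : 'I_4 := inord (2 * i + j).

Lemma fstI_pair i j : fstI (pairI i j) = i.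
Proof. by case: i j => [[|[|i]] Hi] [[|[|j]] Hj] //; apply/val_inj; rewrite /= !inordK. Qed.

Lemma sndI_pair i j : sndI (pairI i j) = j.
Proof. by case: i j => [[|[|i]] Hi] [[|[|j]] Hj] //; apply/val_inj; rewrite /= !inordK. Qed.

Lemma pairI_fst_snd x : pairI (fstI x) (sndI x) = x.
Proof.
apply/val_inj; rewrite /= !inordK ?ltn_pmod ?ltn_divLR //.
all: by rewrite mulnC -divn_eq.
Qed.

Lemma eq_ordI4 (x y : 'I_4) : (x == y) = (fstI x == fstI y) && (sndI x == sndI y).
Proof.
apply/eqP/andP => [-> // | [/eqP ex /eqP ey]].
by rewrite -[x]pairI_fst_snd -[y]pairI_fst_snd ex ey.
Qed.

Definition flipI (x : 'I_4) : 'I_4 := pairI (sndI x) (fstI x).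

Lemma flipIK : involutive flipI.
Proof. by move=> x; rewrite /flipI fstI_pair sndI_pair pairI_fst_snd. Qed.

Definition flip_perm : 'S_4 := perm (inv_inj flipIK).

Lemma flip_permV : (flip_perm^-1 = flip_perm)%g.
Proof. by apply/permP => x; apply: (@perm_inj _ flip_perm); rewrite permKV !permE flipIK. Qed.

Lemma flipP_perm_mx (R : pzRingType) : flipP R = perm_mx flip_perm.
Proof.
apply/matrixP => x y; rewrite !mxE permE eq_ordI4 /flipI fstI_pair sndI_pair.
by rewrite andbC; case: ifP.
Qed.

Section TensorFactors.

Variables (R : pzRingType) (T : 'M[R]_2).

Lemma mul_flipP_tens1 : flipP R *m tens1 T = tens2 T *m flipP R.
Proof.
rewrite flipP_perm_mx -row_permE -[in RHS]flip_permV -col_permE.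
by apply/matrixP => x y; rewrite !mxE !permE !fstI_pair !sndI_pair.
Qed.

Lemma mul_flipP_tens2 : flipP R *m tens2 T = tens1 T *m flipP R.
Proof.
rewrite flipP_perm_mx -row_permE -[in RHS]flip_permV -col_permE.
by apply/matrixP => x y; rewrite !mxE !permE !fstI_pair !sndI_pair.
Qed.

Lemma mul_flipP_tens12 :
  flipP R *m (tens1 T *m tens2 T) = tens2 T *m tens1 T *m flipP R.
Proof. by rewrite mulmxA mul_flipP_tens1 -mulmxA mul_flipP_tens2 mulmxA. Qed.

Lemma tens12E x y :
  (tens1 T *m tens2 T) x y = T (fstI x) (fstI y) * T (sndI x) (sndI y).
Proof.
rewrite mxE (bigD1 (pairI (fstI y) (sndI x))) //= big1 ?addr0 => [|z].
  by rewrite !mxE !fstI_pair !sndI_pair !eqxx.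
rewrite eq_ordI4 fstI_pair sndI_pair !mxE.
case: (fstI z =P fstI y) => [->|_]; last by rewrite mulr0.
by case: (sndI x =P sndI z) => [->|_]; rewrite ?eqxx ?mul0r.
Qed.

End TensorFactors.

Lemma tens12_Tmat (R : pzRingType) (a b c d : R) :
  tens1 (Tmat a b c d) *m tens2 (Tmat a b c d) =
  mx4 [:: [:: a * a; a * b; b * a; b * b];
          [:: a * c; a * d; b * c; b * d];
          [:: c * a; c * b; d * a; d * b];
          [:: c * c; c * d; d * c; d * d]].
Proof.
apply/matrixP => x y; rewrite tens12E !mxE.
by case: x y => [[|[|[|[|x]]]] Hx] [[|[|[|[|y]]]] Hy] //=; rewrite -!val_eqE /= !inordK.
Qed.

Lemma comm_mx_eigen_rank1 (R : pzRingType) n (M : 'M[R]_n) (u : 'cV_n) (w : 'rV_n)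
    (e : R) :
  M *m u = u *m e%:M -> w *m M = e%:M *m w -> comm_mx M (u *m w).
Proof. by rewrite /comm_mx => Mu wM; rewrite mulmxA Mu -mulmxA -wM mulmxA. Qed.

Section RhatRank1.

Variables (F : fieldType) (A : algType F).

Definition Rhat_col (K q : F) : 'cV[A]_4 := \col_i [:: 0; (- K)%:A; (K * q)%:A; 0]`_i.

Definition Rhat_row (p : F) : 'rV[A]_4 := \row_j [:: 0; 1; (- p^-1)%:A; 0]`_j.

Lemma RhatE K p q : Rhat A K p q = 1%:M + Rhat_col K q *m Rhat_row p.
Proof.
apply/matrixP => i j; rewrite !mxE big_ord1 !mxE.
case: i j => [[|[|[|[|i]]]] Hi] [[|[|[|[|j]]]] Hj] //=.
all: rewrite ?(mul0r, mulr0, mulr1, addr0, add0r) ?mulr_algl ?scalerA //.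
- by rewrite scalerBl scale1r scaleNr.
- by rewrite mulrNN.
- by rewrite mulrN !scaleNr scalerBl scale1r.
Qed.

End RhatRank1.

Section QuantumMatrix.

Variables (F : fieldType) (A : algType F) (p q : F) (a b c d : A).
Hypotheses (p_neq0 : p != 0) (ab_q : a * b = q *: (b * a))
  (ca_p : p *: (a * c) = c * a) (ad_da : a * d = d * a + (q - p) *: (b * c))
  (cb_pq : (p * q) *: (b * c) = c * b) (db_p : p *: (b * d) = d * b)
  (cd_q : c * d = q *: (d * c)).

Definition qdet : A := a * d - q *: (b * c).

Local Notation T12 := (tens1 (Tmat a b c d) *m tens2 (Tmat a b c d)).

Lemma mul_tens12_Rhat_col K : T12 *m Rhat_col A K q = Rhat_col A K q *m qdet%:M.
Proof.
apply/matrixP => x j; rewrite tens12_Tmat ord1 !mxE big_ord1 !mxE.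
rewrite !big_ord_recr big_ord0 /= !mxE /=.
case: x => [[|[|[|[|x]]]] Hx] //=.
all: rewrite ?(mul0r, mulr0, mulr1, addr0, add0r) ?mulr_algl ?mulr_algr ?mulr1n.
- by rewrite ab_q scalerA -scalerDl mulNr addNr scale0r.
- by rewrite /qdet scalerBr scalerA mulNr !scaleNr opprK.
- rewrite /qdet ad_da -cb_pq scalerBr scalerDr !scalerA addrC -addrA -scalerBl.
  by congr (_ + _ *: _); ring.
- by rewrite cd_q scalerA -scalerDl mulNr addNr scale0r.
Qed.

Lemma mul_Rhat_row_tens12 : Rhat_row A p *m T12 = qdet%:M *m Rhat_row A p.
Proof.
apply/matrixP => i y; rewrite tens12_Tmat ord1 !mxE big_ord1 !mxE.
rewrite !big_ord_recr big_ord0 /= !mxE /=.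
case: y => [[|[|[|[|y]]]] Hy] //=.
all: rewrite ?(mul0r, mulr0, mul1r, mulr1, addr0, add0r) ?mulr_algl ?mulr_algr ?mulr1n.
- by rewrite -ca_p scalerA mulNr mulVf // scaleN1r addrN.
- by rewrite -cb_pq scalerA mulNr mulKf // scaleNr.
- rewrite /qdet ad_da scalerBr scalerDr !scalerA addrC -addrA -scalerBl.
  by rewrite -[b * c in LHS]scale1r; congr (_ + _ *: _); field.
- by rewrite -db_p scalerA mulNr mulVf // scaleN1r addrN.
Qed.

Lemma comm_Rhat_tens12 K : comm_mx (Rhat A K p q) T12.
Proof.
apply: comm_mx_sym; rewrite RhatE; apply: comm_mxD; first exact: comm_mx1.
exact: comm_mx_eigen_rank1 (mul_tens12_Rhat_col K) mul_Rhat_row_tens12.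
Qed.

End QuantumMatrix.

Theorem mainTheorem1 (F : fieldType) (A : algType F) (p q : F) (a b c d : A) :
  p != 0 ->
  a * b = q *: (b * a) ->
  p *: (a * c) = c * a ->
  a * d = d * a + (q - p) *: (b * c) ->
  (p * q) *: (b * c) = c * b ->
  p *: (b * d) = d * b ->
  c * d = q *: (d * c) ->
  forall K : F,
    Rmat A K p q *m (tens1 (Tmat a b c d) *m tens2 (Tmat a b c d))
    = (tens2 (Tmat a b c d) *m tens1 (Tmat a b c d)) *m Rmat A K p q.
Proof.
move=> p_neq0 ab_q ca_p ad_da cb_pq db_p cd_q K.
have comm_T12 := comm_Rhat_tens12 p_neq0 ab_q ca_p ad_da cb_pq db_p cd_q K.
by rewrite /Rmat -[LHS]mulmxA comm_T12 mulmxA mul_flipP_tens12 -!mulmxA.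
Qed.
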